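(* Let $|\Psi\rangle$ be a normalized state of the periodic chain which is simultaneously an eigenvector of $H$ and of the one-site translation operator $U$. Fix indices $\alpha\neq\beta$ and define $$C(x)=\langle\Psi|\,J_\alpha(x)\,q_\beta(0)-q_\alpha(x)\,J_\beta(1)\,|\Psi\rangle .$$ Then $C(x)$ is independent of $x$, i.e. $C(x+1)=C(x)$ for all $x$.
   Context: Consider a spin chain of length $L$ with periodic boundary conditions, Hilbert space $(\mathbb{C}^N)^{\otimes L}$, sites labelled by $x\in\mathbb{Z}$ modulo $L$. Let $U$ be the unitary one-site translation operator. A local operator family $\mathcal{O}(x)$ is called translation covariant if $\mathcal{O}(x+1)=U\mathcal{O}(x)U^{-1}$. The chain has a Hamiltonian $H=\sum_{x=1}^L h(x)$ with $h(x)$ local and translation covariant, and a family of mutually commuting conserved charges $Q_\alpha=\sum_{x=1}^L q_\alpha(x)$, with $q_\alpha(x)$ translation covariant local operators (charge densities), $[Q_\alpha,Q_\beta]=0$, $[H,Q_\alpha]=0$, $[U,Q_\alpha]=[U,H]=0$. The current operators $J_\alpha(x)$ are translation covariant local operators defined by the continuity equation $$ i\,[H,q_\alpha(x)]=J_\alpha(x)-J_\alpha(x+1)\quad\text{for all }x.$$ *)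

From HB Require Import structures.
From mathcomp Require Import all_boot all_order all_algebra algC.
Set Implicit Arguments. Unset Strict Implicit. Unset Printing Implicit Defensive.
Import Order.TTheory GRing.Theory Num.Theory.
Local Open Scope ring_scope.

(* Basis configurations of the periodic chain (C^N)^{(x) L}: a value in
   {0..N-1} at each of the sites 0..L-1 (sites are taken modulo L). *)
Definition conf (N L : nat) := {ffun 'I_L -> 'I_N}.

(* Dimension of the Hilbert space, = N^L. Operators are 'M[algC]_(hdim N L),
   states are 'cV[algC]_(hdim N L), in the basis enum (conf N L). *)
Definition hdim (N L : nat) : nat := #|{: conf N L}|.

Definition shiftc (N L : nat) (s : conf N L) : conf N L :=
  [ffun j => s (ord_pred j)].

(* The one-site translation operator U : |s> |-> |shiftc s>.
   With this convention, U O(x) U^{-1} acts on site x+1 when O(x) acts on x. *)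
Definition transl (N L : nat) : 'M[algC]_(hdim N L) :=
  \matrix_(i, j) ((enum_val i == shiftc (enum_val j : conf N L))%:R).

Definition adj (m n : nat) (A : 'M[algC]_(m, n)) : 'M[algC]_(n, m) :=
  (map_mx (@Num.conj algC) A)^T.

Definition comm (n : nat) (A B : 'M[algC]_n) : 'M[algC]_n := A *m B - B *m A.

Definition expect (n : nat) (Psi : 'cV[algC]_n) (A : 'M[algC]_n) : algC :=
  (adj Psi *m A *m Psi) 0 0.

From HB Require Import structures.
From mathcomp Require Import all_boot all_order all_algebra algC.
From mathcomp Require Import ring.
Set Implicit Arguments. Unset Strict Implicit.
Import Order.TTheory GRing.Theory Num.Theory.
Local Open Scope ring_scope.
Local Open Scope sesquilinear_scope.

(* In an eigenstate of the self-adjoint H the expectation of every commutator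
   [H, M] vanishes. For M = q_a(x) q_b(0) the Leibniz rule and the continuity
   equation turn this into
     <J_a(x) q_b(0)> - <J_a(x+1) q_b(0)> = <q_a(x) J_b(1)> - <q_a(x) J_b(0)>.
   As Psi is also an eigenvector of the unitary translation U, expectations are
   invariant under M |-> U M U^-1, so <q_a(x) J_b(0)> = <q_a(x+1) J_b(1)>, and
   the identity above becomes C(x) = C(x+1). *)

Lemma adjE m n (A : 'M[algC]_(m, n)) : adj A = A ^t*.
Proof. by rewrite /adj map_trmx. Qed.

Lemma adjM m n p (A : 'M[algC]_(m, n)) (B : 'M[algC]_(n, p)) :
  adj (A *m B) = adj B *m adj A.
Proof. by rewrite /adj map_mxM trmx_mul. Qed.

Lemma adjZ m n (c : algC) (A : 'M[algC]_(m, n)) : adj (c *: A) = c^* *: adj A.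
Proof. by apply/matrixP=> i j; rewrite !mxE rmorphM. Qed.

Lemma adjK m n (A : 'M[algC]_(m, n)) : adj (adj A) = A.
Proof. by rewrite !adjE trmxCK. Qed.

Lemma comm_mulmxr n (A B C : 'M[algC]_n) :
  comm A (B *m C) = comm A B *m C + B *m comm A C.
Proof. by rewrite /comm mulmxBl mulmxBr !mulmxA addrA subrK. Qed.

Lemma scalar_mx1_inj (c d : algC) : c *: (1%:M : 'M[algC]_1) = d *: 1%:M -> c = d.
Proof. by move/matrixP/(_ 0 0); rewrite !mxE eqxx !mulr1. Qed.

Section Expectation.

Variables (n : nat) (Psi : 'cV[algC]_n).
Hypothesis Psi_normed : adj Psi *m Psi = 1%:M.

Lemma expectB (A B : 'M[algC]_n) :
  expect Psi (A - B) = expect Psi A - expect Psi B.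
Proof. by rewrite /expect mulmxBr mulmxBl !mxE. Qed.

Lemma expectZ c (A : 'M[algC]_n) : expect Psi (c *: A) = c * expect Psi A.
Proof. by rewrite /expect -scalemxAr -scalemxAl !mxE. Qed.

Section SelfadjointEigenstate.

Variables (H : 'M[algC]_n) (E : algC).
Hypotheses (H_selfadj : adj H = H) (Psi_eigen : H *m Psi = E *: Psi).

Lemma adj_eigen_selfadj : adj Psi *m H = E *: adj Psi.
Proof.
have PsiH : adj Psi *m H = E^* *: adj Psi by rewrite -H_selfadj -adjM Psi_eigen adjZ.
suff <- : E^* = E by [].
apply: scalar_mx1_inj; rewrite -Psi_normed scalemxAl -PsiH -mulmxA Psi_eigen.
by rewrite scalemxAr.
Qed.

Lemma expect_comm_eigen (M : 'M[algC]_n) : expect Psi (comm H M) = 0.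
Proof.
rewrite /comm expectB /expect !mulmxA adj_eigen_selfadj -!mulmxA Psi_eigen.
by rewrite -scalemxAl -!scalemxAr !mxE subrr.
Qed.

Lemma expect_comm_mulmxl (A B : 'M[algC]_n) :
  expect Psi (comm H A *m B) = - expect Psi (A *m comm H B).
Proof.
have := expect_comm_eigen (A *m B).
by rewrite comm_mulmxr /expect mulmxDr mulmxDl mxE => /eqP; rewrite addr_eq0 => /eqP.
Qed.

End SelfadjointEigenstate.

Lemma expect_conj_unitary (U : 'M[algC]_n) lam :
  U \is unitarymx -> U *m Psi = lam *: Psi ->
  forall M, expect Psi (U *m M *m invmx U) = expect Psi M.
Proof.
move=> U_unitary Psi_eigen M; rewrite invmx_unitary // -adjE.
have UUadj : U *m adj U = 1%:M by rewrite adjE; apply/unitarymxP.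
pose W := adj U *m Psi.
have PsiW : Psi = lam *: W.
  by rewrite /W scalemxAr -Psi_eigen mulmxA (mulmx1C UUadj) mul1mx.
have W_normed : adj W *m W = 1%:M.
  by rewrite /W adjM adjK mulmxA -(mulmxA _ U) UUadj mulmx1.
have lam_normed : lam^* * lam = 1.
  apply: scalar_mx1_inj; rewrite scale1r -[RHS]Psi_normed PsiW adjZ.
  by rewrite -scalemxAl -scalemxAr W_normed scalerA.
rewrite /expect; have -> : adj Psi *m (U *m M *m adj U) *m Psi = adj W *m M *m W.
  by rewrite /W adjM adjK !mulmxA.
rewrite PsiW adjZ -scalemxAl -scalemxAr -scalemxAl scalerA mulrC.
by rewrite lam_normed scale1r.
Qed.

End Expectation.

Lemma shiftc_inj N L : injective (@shiftc N L).
Proof.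
move=> s t /ffunP st; apply/ffunP => j.
by have := st (ordS j); rewrite !ffunE ordSK.
Qed.

Lemma transl_unitary N L : transl N L \is unitarymx.
Proof.
rewrite -trmx_unitary; apply/unitarymxP.
have -> : (transl N L)^T ^t* = transl N L.
  by apply/matrixP=> i j; rewrite !mxE conjC_nat.
apply/matrixP=> i j; rewrite !mxE.
rewrite (bigD1 (enum_rank (shiftc (enum_val i : conf N L)))) //= big1 ?addr0.
  rewrite !mxE enum_rankK eqxx mul1r.
  by rewrite (inj_eq (@shiftc_inj N L)) (inj_eq enum_val_inj) eq_sym.
move=> k k_shift; rewrite !mxE.
case: eqP => [ki|]; last by rewrite mul0r.
by case/eqP: k_shift; rewrite -ki enum_valK.
Qed.

Theorem mainTheorem1
  (N L : nat) (Idx : Type)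
  (h : int -> 'M[algC]_(hdim N L)) (H : 'M[algC]_(hdim N L))
  (q J : Idx -> int -> 'M[algC]_(hdim N L)) (Q : Idx -> 'M[algC]_(hdim N L))
  (Psi : 'cV[algC]_(hdim N L)) (alpha beta : Idx) :
  (0 < N)%N -> (0 < L)%N ->
  (* Hamiltonian: sum of translation covariant densities, self-adjoint *)
  (forall x, h (x + 1) = transl N L *m h x *m invmx (transl N L)) ->
  H = \sum_(1 <= x < L.+1) h (Posz x) ->
  adj H = H ->
  (* charges *)
  (forall a x, q a (x + 1) = transl N L *m q a x *m invmx (transl N L)) ->
  (forall a, Q a = \sum_(1 <= x < L.+1) q a (Posz x)) ->
  (forall a b, comm (Q a) (Q b) = 0) ->
  (forall a, comm H (Q a) = 0) ->
  (forall a, comm (transl N L) (Q a) = 0) ->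
  comm (transl N L) H = 0 ->
  (* currents: translation covariant, continuity equation *)
  (forall a x, J a (x + 1) = transl N L *m J a x *m invmx (transl N L)) ->
  (forall a x, 'i *: comm H (q a x) = J a x - J a (x + 1)) ->
  (* normalized simultaneous eigenvector of H and U *)
  adj Psi *m Psi = 1%:M ->
  (exists E : algC, H *m Psi = E *: Psi) ->
  (exists lam : algC, transl N L *m Psi = lam *: Psi) ->
  alpha <> beta ->
  forall x : int,
    expect Psi (J alpha (x + 1) *m q beta 0 - q alpha (x + 1) *m J beta 1)
    = expect Psi (J alpha x *m q beta 0 - q alpha x *m J beta 1).
Proof.
move=> _ _ _ _ H_selfadj q_cov _ _ _ _ _ J_cov continuity Psi_normed
  [E H_eigen] [lam U_eigen] _ x.
have balance : expect Psi ((J alpha x - J alpha (x + 1)) *m q beta 0)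
             = - expect Psi (q alpha x *m (J beta 0 - J beta (0 + 1))).
  rewrite -!continuity -scalemxAl -scalemxAr !expectZ.
  by rewrite (expect_comm_mulmxl Psi_normed H_selfadj H_eigen) mulrN.
have shift : expect Psi (q alpha (x + 1) *m J beta (0 + 1))
           = expect Psi (q alpha x *m J beta 0).
  have transl_inv := expect_conj_unitary Psi_normed (transl_unitary N L) U_eigen.
  rewrite q_cov J_cov -(transl_inv (q alpha x *m J beta 0)).
  by rewrite !mulmxA mulmxKV // unitarymx_unit // transl_unitary.
move: balance shift; rewrite add0r !(mulmxBl, mulmxBr, expectB) => balance ->.
pose a x := expect Psi (J alpha x *m q beta 0).
rewrite -/(a x) -/(a (x + 1)) -[a x](subrK (a (x + 1))) balance.
ring.
Qed.
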